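(* Let $\mathcal{H}=(X,\mathcal{E})$ be a hyperstar, and let $c^*\in X$ be a vertex contained in every edge of $\mathcal{H}$. Let $\mathcal{H}^-=(X\setminus\{c^*\},\{E\setminus\{c^*\}:E\in\mathcal{E}\})$. Then $\mathrm{dec}(\mathcal{H})=\tau(\mathcal{H}^-)=\tau_2(\mathcal{H})-1$ and $\overline{\chi}(\mathcal{H})=\alpha(\mathcal{H}^-)+1$.
   Context: A hypergraph $\mathcal{H}=(X,\mathcal{E})$ has a finite vertex set $X$, $|X|=n$, and edges that are subsets of $X$ with at least 2 vertices; it is a hyperstar if some vertex lies in every edge. A C-coloring is a map $\varphi:X\to\mathbb{N}$ such that every edge contains two distinct vertices of the same color; $\overline{\chi}(\mathcal{H})$ is the maximum number of colors in a C-coloring and $\mathrm{dec}(\mathcal{H})=n-\overline{\chi}(\mathcal{H})$. For a set system (possibly with edges of size 1), $\tau$ is the minimum size of a vertex set meeting every edge and $\alpha$ is the maximum size of a vertex set containing no edge entirely. $\tau_2(\mathcal{H})$ is the minimum size of a set $T\subseteq X$ with $|E\cap T|\ge 2$ for every edge $E$. *)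

From mathcomp Require Import all_boot.
Set Implicit Arguments. Unset Strict Implicit. Unset Printing Implicit Defensive.

(* A hypergraph H = (X, E): vertex set X = all of the finite type T,
   edge family E : {set {set T}}; each edge must have >= 2 vertices. *)
Definition is_hypergraph (T : finType) (E : {set {set T}}) : Prop :=
  forall e, e \in E -> 1 < #|e|.

Definition is_hyperstar (T : finType) (E : {set {set T}}) : Prop :=
  exists c : T, forall e, e \in E -> c \in e.

(* C-coloring: every edge contains two distinct vertices of the same color.
   Colors are taken in 'I_#|T| (no loss: a coloring uses at most |X| colors,
   and only the number of colors matters). *)
Definition C_coloring (T : finType) (E : {set {set T}}) (f : {ffun T -> 'I_#|T|}) : bool :=
  [forall e in E, [exists x in e, [exists y in e, (x != y) && (f x == f y)]]].

Definition ncolors (T : finType) (f : {ffun T -> 'I_#|T|}) : nat :=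
  #|f @: [set: T]|.

Definition chibar (T : finType) (E : {set {set T}}) : nat :=
  \max_(f : {ffun T -> 'I_#|T|} | C_coloring E f) ncolors f.

Definition dec (T : finType) (E : {set {set T}}) : nat := #|T| - chibar E.

(* Transversal number of the set system (V, F) (edges may have size 1):
   minimum size of S \subset V meeting every edge.  (V itself is always
   feasible when the edges are nonempty subsets of V, so the default #|V|
   of the min is never the binding value then.) *)
Definition tau (T : finType) (V : {set T}) (F : {set {set T}}) : nat :=
  \big[minn/#|V|]_(S : {set T} | (S \subset V) && [forall e in F, S :&: e != set0]) #|S|.

Definition alpha (T : finType) (V : {set T}) (F : {set {set T}}) : nat :=
  \max_(S : {set T} | (S \subset V) && [forall e in F, ~~ (e \subset S)]) #|S|.

Definition tau2 (T : finType) (E : {set {set T}}) : nat :=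
  \big[minn/#|T|]_(S : {set T} | [forall e in E, 1 < #|e :&: S|]) #|S|.

Definition minus_vertices (T : finType) (c : T) : {set T} := [set~ c].
Definition minus_edges (T : finType) (E : {set {set T}}) (c : T) : {set {set T}} :=
  [set e :\ c | e in E].

From mathcomp Require Import all_boot zify.
Set Implicit Arguments. Unset Strict Implicit. Unset Printing Implicit Defensive.

(* Choosing one vertex of each colour of a C-coloring other than the colour
   of the centre c gives a set S on which the colouring is injective and
   which misses the colour of c; an edge E \ c inside S would leave no room
   for two equally coloured vertices of E, so S is independent in H^-.
   Conversely, colouring an independent set S of H^- injectively and all other
   vertices like c is a C-coloring, as each edge has a vertex other than c
   outside S.  Hence chibar(H) = alpha(H^-) + 1, and dec(H) = tau(H^-) because
   complements of transversals are independent, so tau + alpha = |X \ c|.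
   Finally c plus a transversal of H^- is a 2-transversal of H, and a
   2-transversal minus c (or minus any vertex if c is absent) is a
   transversal of H^-, whence tau_2(H) = tau(H^-) + 1. *)

Section BigMinn.

Variables (I : finType) (P : pred I) (F : I -> nat) (d : nat).

Lemma bigminn_le i : P i -> \big[minn/d]_(j | P j) F j <= F i.
Proof.
move=> Pi; rewrite -big_filter.
have : i \in filter P (index_enum I) by rewrite mem_filter Pi mem_index_enum.
elim: (filter _ _) => //= j s IHs; rewrite inE big_cons => /predU1P[<-|/IHs].
  exact: geq_minl.
exact/leq_trans/geq_minr.
Qed.

Lemma bigminn_le_idx : \big[minn/d]_(j | P j) F j <= d.
Proof. by elim/big_rec: _ => // i x _ lexd; rewrite geq_min lexd orbT. Qed.

Lemma leq_bigminn m :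
  m <= d -> (forall i, P i -> m <= F i) -> m <= \big[minn/d]_(j | P j) F j.
Proof.
by move=> le_md le_mF; elim/big_ind: _ => // x y; rewrite leq_min => ->.
Qed.

Lemma bigminn_predn :
  (\big[minn/d]_(j | P j) F j).-1 = \big[minn/d.-1]_(j | P j) (F j).-1.
Proof. by apply: (big_morph predn) => // x y; lia. Qed.

End BigMinn.

Lemma bigmax_attained (I : finType) (P : pred I) (F : I -> nat) i0 :
  P i0 -> exists2 i, P i & \max_(j | P j) F j = F i.
Proof.
move=> Pi0; rewrite (bigmax_eq_arg i0) //.
by case: arg_maxnP => // i Pi _; exists i.
Qed.

Lemma exists_section (aT rT : finType) (f : aT -> rT) (A : {set rT}) :
  A \subset f @: [set: aT] ->
  exists2 S : {set aT}, {in S &, injective f} & f @: S = A.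
Proof.
move=> sAf; pose S := [set x | (f x \in A) && ([pick y | f y == f x] == Some x)].
exists S.
  move=> x y; rewrite !inE => /andP[_ /eqP px] /andP[_ /eqP py] fxy.
  by apply: Some_inj; rewrite -px -py fxy.
apply/setP => i; apply/imsetP/idP => [[x] | iA].
  by rewrite inE => /andP[fxA _] ->.
have /imsetP[z _ iz] := subsetP sAf i iA.
suff [y fyz pick_y] : exists2 y, f y = f z & [pick y | f y == f z] = Some y.
  by exists y; rewrite ?inE fyz ?pick_y -?iz ?iA ?eqxx.
by case: pickP => [y /eqP fyz|/(_ z)]; [exists y | rewrite eqxx].
Qed.

Section SetSystem.

Variables (T : finType) (V : {set T}) (F : {set {set T}}).

Definition transversal (S : {set T}) : bool :=
  (S \subset V) && [forall e in F, S :&: e != set0].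

Definition independent (S : {set T}) : bool :=
  (S \subset V) && [forall e in F, ~~ (e \subset S)].

Lemma tau_le S : transversal S -> tau V F <= #|S|.
Proof. exact: bigminn_le. Qed.

Lemma tau_le_card : tau V F <= #|V|.
Proof. exact: bigminn_le_idx. Qed.

Lemma leq_tau m :
  m <= #|V| -> (forall S : {set T}, transversal S -> m <= #|S|) -> m <= tau V F.
Proof. exact: leq_bigminn. Qed.

Lemma leq_alpha S : independent S -> #|S| <= alpha V F.
Proof. exact: leq_bigmax_cond. Qed.

Lemma alpha_leq m :
  (forall S : {set T}, independent S -> #|S| <= m) -> alpha V F <= m.
Proof. by move=> le_Sm; apply/bigmax_leqP. Qed.

Lemma alpha_attained :
  independent set0 -> exists2 S : {set T}, independent S & alpha V F = #|S|.
Proof. exact: bigmax_attained. Qed.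

Lemma card_setDC (S : {set T}) : S \subset V -> #|V :\: S| = #|V| - #|S|.
Proof. by move=> sSV; rewrite cardsD (setIidPr sSV). Qed.

Lemma independent_setDC S : transversal S -> independent (V :\: S).
Proof.
case/andP=> _ /forallP meetS; rewrite /independent subsetDl /=.
apply/forall_inP => e Fe.
have /set0Pn[x] := implyP (meetS e) Fe; rewrite inE => /andP[xS xe].
by apply/subsetPn; exists x; rewrite // inE xS.
Qed.

Hypothesis edges_sub : forall e, e \in F -> e \subset V.

Lemma transversal_setDC S : independent S -> transversal (V :\: S).
Proof.
case/andP=> _ /forallP notsubS; rewrite /transversal subsetDl /=.
apply/forall_inP => e Fe.
have /subsetPn[x xe xNS] := implyP (notsubS e) Fe.
by apply/set0Pn; exists x; rewrite !inE xNS xe (subsetP (edges_sub Fe)).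
Qed.

Lemma tau_add_alpha : tau V F + alpha V F = #|V|.
Proof.
apply/eqP; rewrite eqn_leq; apply/andP; split.
  rewrite -leq_subRL ?tau_le_card //; apply: alpha_leq => S iS.
  have := tau_le (transversal_setDC iS); rewrite card_setDC; last by case/andP: iS.
  by have := subset_leq_card (proj1 (andP iS)); lia.
rewrite addnC -leq_subLR; apply: leq_tau => [|S tS]; first exact: leq_subr.
have := leq_alpha (independent_setDC tS); rewrite card_setDC; last by case/andP: tS.
by have := subset_leq_card (proj1 (andP tS)); lia.
Qed.

End SetSystem.

Definition two_transversal (T : finType) (E : {set {set T}}) S : bool :=
  [forall e in E, 1 < #|e :&: S|].

Lemma tau2_le (T : finType) (E : {set {set T}}) S :
  two_transversal E S -> tau2 E <= #|S|.
Proof. exact: bigminn_le. Qed.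

Lemma tau2_le_card (T : finType) (E : {set {set T}}) : tau2 E <= #|T|.
Proof. exact: bigminn_le_idx. Qed.

Section Hyperstar.

Variables (T : finType) (E : {set {set T}}) (c : T).
Hypothesis centre : forall e, e \in E -> c \in e.

Local Notation V := (minus_vertices c).
Local Notation F := (minus_edges E c).

Lemma mem_minus_vertices x : (x \in V) = (x != c).
Proof. exact: in_setC1. Qed.

Lemma centre_notin_sub (S : {set T}) : S \subset V -> c \notin S.
Proof. by move/subsetP/(_ c)/contra; apply; rewrite in_setC1 eqxx. Qed.

Lemma card_minus_vertices : #|V| = #|T|.-1.
Proof. exact: cardsC1. Qed.

Lemma minus_edges_sub e : e \in F -> e \subset V.
Proof.
by case/imsetP=> e0 _ ->; apply/subsetP => x; rewrite in_setD1 in_setC1 => /andP[].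
Qed.

Lemma independent_set0 : is_hypergraph E -> independent V F set0.
Proof.
move=> hyp; rewrite /independent sub0set; apply/forall_inP => _ /imsetP[e Ee ->].
rewrite subset0 -card_gt0; have := cardsD1 c e; rewrite centre //=.
by have := hyp e Ee; lia.
Qed.

Definition star_coloring (S : {set T}) : {ffun T -> 'I_#|T|} :=
  [ffun x => if x \in S then enum_rank x else enum_rank c].

Lemma star_coloring_C (S : {set T}) :
  independent V F S -> C_coloring E (star_coloring S).
Proof.
case/andP=> sSV /forallP notsubS; apply/forall_inP => e Ee.
have /subsetPn[x] := implyP (notsubS (e :\ c)) (imset_f _ Ee).
rewrite in_setD1 => /andP[xc xe] xNS.
have cNS := centre_notin_sub sSV.
apply/exists_inP; exists x => //.
apply/exists_inP; exists c; rewrite ?(centre Ee) //.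
by rewrite xc !ffunE (negPf xNS) (negPf cNS) eqxx.
Qed.

Lemma ncolors_star_coloring (S : {set T}) :
  c \notin S -> ncolors (star_coloring S) = #|S|.+1.
Proof.
move=> cNS; rewrite /ncolors.
suff -> : star_coloring S @: [set: T] = enum_rank @: (c |: S).
  by rewrite card_imset ?cardsU1 ?cNS //; apply: enum_rank_inj.
apply/setP => i; apply/imsetP/imsetP => [[x _ ->]|[x + ->]].
  rewrite ffunE; case: ifP => xS; [exists x | exists c] => //.
    by rewrite !inE xS orbT.
  by rewrite !inE eqxx.
rewrite !inE => /predU1P[xc|xS]; exists x => //; rewrite ffunE ?xS //.
by rewrite xc (negPf cNS).
Qed.

Lemma rainbow_independent (f : {ffun T -> 'I_#|T|}) (S : {set T}) :
  C_coloring E f -> {in S &, injective f} -> f c \notin f @: S ->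
  independent V F S.
Proof.
move=> fC injf fcNS.
have notc x : x \in S -> x != c.
  by move=> xS; apply: contraNneq fcNS => <-; apply: imset_f.
apply/andP; split.
  by apply/subsetP => x xS; rewrite mem_minus_vertices notc.
apply/forall_inP => _ /imsetP[e Ee ->]; apply/negP => sub_eS.
have memS z : z \in e -> z != c -> z \in S.
  by move=> ze zc; apply: (subsetP sub_eS); rewrite in_setD1 zc ze.
have /exists_inP[x xe /exists_inP[y ye /andP[xy /eqP fxy]]] := forall_inP fC e Ee.
have [xS|xNS] := boolP (x \in S); have [yS|yNS] := boolP (y \in S).
- by move: xy; rewrite (injf _ _ xS yS fxy) eqxx.
- have yc := contraNeq (memS y ye) yNS.
  by move: fcNS; rewrite -yc -fxy imset_f.
- have xc := contraNeq (memS x xe) xNS.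
  by move: fcNS; rewrite -xc fxy imset_f.
- have xc := contraNeq (memS x xe) xNS; have yc := contraNeq (memS y ye) yNS.
  by move: xy; rewrite xc yc eqxx.
Qed.

Lemma ncolors_le_alpha (f : {ffun T -> 'I_#|T|}) :
  C_coloring E f -> ncolors f <= (alpha V F).+1.
Proof.
move=> fC; have [S injf imS] := exists_section (subD1set (f @: [set: T]) (f c)).
have fcNS : f c \notin f @: S by rewrite imS setD11.
have := leq_alpha (rainbow_independent fC injf fcNS).
rewrite -(card_in_imset injf) imS /ncolors (cardsD1 (f c) (f @: _)).
by rewrite (imset_f _ (in_setT c)).
Qed.

Lemma chibar_eq : is_hypergraph E -> chibar E = (alpha V F).+1.
Proof.
move=> hyp; apply/eqP; rewrite eqn_leq; apply/andP; split.
  by apply/bigmax_leqP => f; apply: ncolors_le_alpha.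
have [S iS ->] := alpha_attained (independent_set0 hyp).
have cNS := centre_notin_sub (proj1 (andP iS)).
rewrite -(ncolors_star_coloring cNS).
exact: (leq_bigmax_cond (P := C_coloring E)) (star_coloring_C iS).
Qed.

Lemma two_transversal_setU1 (S : {set T}) :
  transversal V F S -> two_transversal E (c |: S).
Proof.
case/andP=> sSV /forallP meetS; apply/forall_inP => e Ee.
have /set0Pn[y] := implyP (meetS (e :\ c)) (imset_f _ Ee).
rewrite !inE => /and3P[yS yc ye].
have sub2 : [set c; y] \subset e :&: (c |: S).
  by apply/subsetP => z; rewrite !inE => /predU1P[->|/eqP->];
    rewrite ?eqxx ?(centre Ee) ?ye ?yS ?orbT.
by have := subset_leq_card sub2; rewrite cards2 eq_sym yc.
Qed.

Lemma transversal_setD1 (S : {set T}) x :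
  two_transversal E S -> (c \in S -> x = c) -> transversal V F (S :\ x).
Proof.
move=> /forall_inP two_S cx; apply/andP; split.
  apply/subsetP => y; rewrite in_setD1 mem_minus_vertices => /andP[yx yS].
  by apply: contraNneq yx => yc; rewrite yc cx // -yc.
apply/forall_inP => _ /imsetP[e Ee ->].
have /card_gt0P[y] : 0 < #|(e :&: S) :\ x|.
  by have := two_S e Ee; rewrite (cardsD1 x); case: (x \in _) => /=; lia.
rewrite !inE => /and3P[yx ye yS]; apply/set0Pn; exists y.
rewrite !inE yx ye yS /= andbT.
by apply: contraNneq yx => yc; rewrite yc cx // -yc.
Qed.

Lemma tau_eq_pred_tau2 : tau V F = (tau2 E).-1.
Proof.
apply/eqP; rewrite eqn_leq; apply/andP; split.
  rewrite /tau2 bigminn_predn; apply: leq_bigminn => [|S two_S].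
    by rewrite -card_minus_vertices tau_le_card.
  have [x cx cardSx] : exists2 x, (c \in S -> x = c) & #|S :\ x| <= #|S|.-1.
    have [cS|cNS] := boolP (c \in S).
      by exists c => //; rewrite (cardsD1 c S) cS.
    have [->|[x xS]] := set_0Vmem S.
      by exists c => //; rewrite cards0 leqn0 cards_eq0 -subset0 subD1set.
    by exists x => [cS|]; [case/negP: cNS | rewrite (cardsD1 x S) xS].
  exact: leq_trans (tau_le (transversal_setD1 two_S cx)) cardSx.
apply: leq_tau => [|S tS].
  by rewrite card_minus_vertices -!subn1; apply/leq_sub2r/tau2_le_card.
have cNS := centre_notin_sub (proj1 (andP tS)).
by have := tau2_le (two_transversal_setU1 tS); rewrite cardsU1 cNS /=; lia.
Qed.

End Hyperstar.

Theorem proposition2 (T : finType) (E : {set {set T}}) (c : T) :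
  is_hypergraph E ->
  (forall e, e \in E -> c \in e) ->
  dec E = tau (minus_vertices c) (minus_edges E c) /\
  tau (minus_vertices c) (minus_edges E c) = tau2 E - 1 /\
  chibar E = alpha (minus_vertices c) (minus_edges E c) + 1.
Proof.
move=> hyp centre.
have chibarE := chibar_eq centre hyp.
have tau_alpha := tau_add_alpha (@minus_edges_sub T E c).
have cardT : 0 < #|T| by apply/card_gt0P; exists c.
split; last split.
- by rewrite /dec chibarE; move: tau_alpha; rewrite card_minus_vertices; lia.
- by rewrite subn1; apply: tau_eq_pred_tau2.
- by rewrite chibarE addn1.
Qed.
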